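(* Let $G=(V,E,p,(V_{E},V_{O}))$ be a parity game on which a lifting sequence is applied, such that at some point a vertex $v$ with $p(v)=k$ is the first vertex whose measure value becomes $\top$, and let $\rho$ be the measure at that point. Let $A=\mathrm{Attr}^{\ge k}_{O}(\{v\})$. (a) If $v\in V_{O}$, then for every successor $u$ of $v$ whose $\rho$-value is maximal among $\{\rho(w):w\in\mathrm{post}(v)\}$ there is an Odd-dominion $D_u$ containing $A$ such that $p(w)\ge k$ for all $w\in D_u$. Moreover, Odd has a winning strategy $\sigma$ that is closed on $D_u$, satisfies $\sigma(v)=u$, and on $A\setminus\{v\}$ is the strategy attracting towards $v$. (b) If $v\in V_{E}$, then there is an Odd-dominion $D$ containing $A$ such that $p(w)\ge k$ for all $w\in D$. Moreover, Odd has a winning strategy $\sigma$ that is closed on $D$ and on $A\setminus\{v\}$ is the strategy attracting towards $v$. In this case $\mathrm{post}(v)\subseteq D$.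
   Context: A parity game $G=(V,E,p,(V_{E},V_{O}))$: finite $V$ partitioned into $V_{E}$ (Even) and $V_{O}$ (Odd), total edge relation $E$, priorities $p:V\to\mathbb{N}$; $\mathrm{post}(v)=\{w:(v,w)\in E\}$, $V_i=\{v:p(v)=i\}$, $V_{\ge k}=\{v:p(v)\ge k\}$. Plays are infinite paths; Even wins iff the least priority occurring infinitely often is even. A set $D$ is an Odd-dominion if Odd has a strategy such that every play starting in $D$ consistent with it is won by Odd and stays in $D$; a strategy is closed on $D$ if all consistent plays from $D$ stay in $D$. Let $d$ be one more than the largest priority. $\mathbb{M}$ consists of $\top$ and all tuples $(m_0,\dots,m_{d-1})\in\mathbb{N}^d$ with $m_i=0$ for even $i$ and $m_i\le|V_i|$ for odd $i$, ordered lexicographically with $\top$ maximal; $m<_i m'$ compares positions $0..i$ only (tuples $<_i\top$, $\top=_i\top$). $\mathrm{Prog}(\rho,v,w)$, for $w\in\mathrm{post}(v)$, is the least $m\in\mathbb{M}$ with $m\ge_{p(v)}\rho(w)$ if $p(v)$ is even, and with $m>_{p(v)}\rho(w)$ or $m=\rho(w)=\top$ if $p(v)$ is odd. $\mathrm{Lift}(\rho,v)$ replaces $\rho(v)$ by $\max\{\rho(v),\min_{w\in\mathrm{post}(v)}\mathrm{Prog}(\rho,v,w)\}$ if $v\in V_{E}$, and by $\max\{\rho(v),\max_{w\in\mathrm{post}(v)}\mathrm{Prog}(\rho,v,w)\}$ if $v\in V_{O}$. A lifting sequence is $\rho_0,\rho_1,\dots$ with $\rho_0\equiv(0,\dots,0)$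 and $\rho_{j+1}=\mathrm{Lift}(\rho_j,v_j)\neq\rho_j$ for some vertex $v_j$. Guarded attractor: for $U\subseteq V_{\ge k}$, $\mathrm{Attr}^{\ge k}_{O}(U)$ is the least $A$ with $U\subseteq A\subseteq V_{\ge k}$ such that every $u\in V_{O}\cap V_{\ge k}$ with $\mathrm{post}(u)\cap A\ne\emptyset$ is in $A$ and every $u\in V_{E}\cap V_{\ge k}$ with $\mathrm{post}(u)\subseteq A$ is in $A$. Computing $A$ as the limit of $A_0=U$, $A_{j+1}=A_j\cup\{$vertices added by the rules from $A_j\}$, the strategy attracting towards $U$ maps each $u\in(A\setminus U)\cap V_{O}$ first added in $A_{j+1}$ to a successor in $A_j$. *)

From mathcomp Require Import all_boot.
Set Implicit Arguments.
Unset Strict Implicit.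
Unset Printing Implicit Defensive.

Section ParityGame.
(* A parity game: finite vertex set V, edge relation E (assumed total in the
   theorem), priorities p, and VO = vertices owned by Odd; the vertices of
   Even are the complement of VO. *)
Variables (V : finType) (E : rel V) (p : V -> nat) (VO : {set V}).

Definition post (v : V) : {set V} := [set w | E v w].
Definition Vpr (i : nat) : {set V} := [set v | p v == i].
Definition Vge (k : nat) : {set V} := [set v | k <= p v].

Definition dim : nat := (\max_(v : V) p v).+1.

(* Measures: Top, or a tuple (m_0,...,m_{d-1}) represented as a seq *)
Inductive meas := Tup of seq nat | Top.

Definition is_top (m : meas) : bool := if m is Top then true else false.

Fixpoint lexlt (s t : seq nat) : bool :=
  match s, t with
  | x :: s', y :: t' => (x < y) || ((x == y) && lexlt s' t')
  | _, _ => false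
  end.
Fixpoint lexle (s t : seq nat) : bool :=
  match s, t with
  | [::], _ => true
  | x :: s', y :: t' => (x < y) || ((x == y) && lexle s' t')
  | _ :: _, [::] => false
  end.

Definition inM (m : meas) : bool :=
  match m with
  | Top => true
  | Tup s => (size s == dim) &&
      all (fun i => if odd i then nth 0 s i <= #|Vpr i| else nth 0 s i == 0)
          (iota 0 dim)
  end.

Definition mle (m m' : meas) : bool :=
  match m, m' with
  | _, Top => true
  | Top, Tup _ => false
  | Tup s, Tup t => lexle s t
  end.

Definition mlt_i (i : nat) (m m' : meas) : bool :=
  match m, m' with
  | Tup s, Tup t => lexlt (take i.+1 s) (take i.+1 t)
  | Tup _, Top => true
  | Top, _ => false
  end.
Definition mle_i (i : nat) (m m' : meas) : bool :=
  match m, m' with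
  | Tup s, Tup t => lexle (take i.+1 s) (take i.+1 t)
  | _, Top => true
  | Top, Tup _ => false
  end.

Definition mmax (a b : meas) : meas := if mle a b then b else a.

Definition prog_cond (rho : V -> meas) (v w : V) (m : meas) : bool :=
  if odd (p v) then mlt_i (p v) (rho w) m || (is_top m && is_top (rho w))
  else mle_i (p v) (rho w) m.

Definition is_prog (rho : V -> meas) (v w : V) (m : meas) : Prop :=
  [/\ inM m, prog_cond rho v w m &
      forall m', inM m' -> prog_cond rho v w m' -> mle m m'].

Definition prog_val (rho : V -> meas) (v : V) (m : meas) : Prop :=
  exists2 w, E v w & is_prog rho v w m.

Definition is_min (P : meas -> Prop) (x : meas) : Prop :=
  P x /\ forall y, P y -> mle x y.
Definition is_max (P : meas -> Prop) (x : meas) : Prop :=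
  P x /\ forall y, P y -> mle y x.

Definition is_lift (rho : V -> meas) (v : V) (rho' : V -> meas) : Prop :=
  (forall u, u != v -> rho' u = rho u) /\
  exists x, (if v \in VO then is_max (prog_val rho v) x
             else is_min (prog_val rho v) x)
            /\ rho' v = mmax (rho v) x.

Definition lifting_seq (rhos : nat -> V -> meas) (vs : nat -> V) (n : nat)
  : Prop :=
  rhos 0 = (fun _ => Tup (nseq dim 0)) /\
  forall j, j < n -> is_lift (rhos j) (vs j) (rhos j.+1) /\ rhos j.+1 <> rhos j.

Definition attr_cond (A : {set V}) (u : V) : bool :=
  if u \in VO then [exists w, E u w && (w \in A)]
  else [forall w, E u w ==> (w \in A)].

Definition attr_closed (k : nat) (A : {set V}) : bool :=
  [forall u, ((u \in Vge k) && attr_cond A u) ==> (u \in A)].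

Definition Attr (k : nat) (U : {set V}) : {set V} :=
  \bigcap_(A : {set V} | [&& U \subset A, A \subset Vge k & attr_closed k A]) A.

Definition attr_step (k : nat) (A : {set V}) : {set V} :=
  A :|: [set u in Vge k | attr_cond A u].
Definition attr_iter (k : nat) (U : {set V}) (j : nat) : {set V} :=
  iter j (attr_step k) U.

Definition is_strategy (sigma : V -> V) : Prop :=
  forall u, u \in VO -> E u (sigma u).

Definition attracting (k : nat) (U : {set V}) (sigma : V -> V) : Prop :=
  forall j u, u \in VO -> u \notin U ->
    u \in attr_iter k U j.+1 -> u \notin attr_iter k U j ->
    sigma u \in attr_iter k U j.

Definition is_play (pi : nat -> V) : Prop := forall i, E (pi i) (pi i.+1).
Definition consistent (sigma : V -> V) (pi : nat -> V) : Prop :=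
  forall i, pi i \in VO -> pi i.+1 = sigma (pi i).

Definition odd_wins (pi : nat -> V) : Prop :=
  exists q, [/\ odd q,
    (forall N, exists2 i, N <= i & p (pi i) = q) &
    (exists N, forall i, N <= i -> q <= p (pi i))].

Definition closed_on (sigma : V -> V) (D : {set V}) : Prop :=
  forall pi, is_play pi -> consistent sigma pi -> pi 0 \in D ->
    forall i, pi i \in D.

Definition wins_from (sigma : V -> V) (D : {set V}) : Prop :=
  forall pi, is_play pi -> consistent sigma pi -> pi 0 \in D -> odd_wins pi.

Definition odd_dominion (D : {set V}) : Prop :=
  exists sigma, [/\ is_strategy sigma, wins_from sigma D & closed_on sigma D].

End ParityGame.

(* Let k = p v.  In the game truncated at k, where every vertex of priority below k
   becomes a sink of priority 0 (so Even wins there), positional determinacy (Zielonka)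
   yields regions WE, WO with positional strategies tau for Even and sigma for Odd.
   Along tau-paths inside WE that avoid priorities below an odd i >= k, no vertex of
   priority i can repeat (that would close a cycle won by Odd), so the maximal number of
   visits to priority i is bounded by the number of such vertices in WE.  These counts form
   a progress measure on WE, and by induction on the lifting sequence every measure stays
   below it on WE.  Since rho(v) = Top, v lies in WO, and so does a successor u of maximal
   measure: otherwise a tuple would satisfy the condition of the value Prog(rho, v, w) = Top
   that lifted v.  Finally WO is closed under the guarded attractor rules, so it contains
   Attr(v), and the strategy going to u at v, attracting towards v inside the attractor and
   following sigma elsewhere keeps plays in WO: either k (odd) is seen infinitely often or
   the play eventually follows sigma. *)

From mathcomp Require Import all_boot zify.
From Stdlib Require Import Classical ClassicalEpsilon.
From Stdlib Require List.

Set Implicit Arguments.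
Unset Strict Implicit.
Unset Printing Implicit Defensive.

(** * Attractors *)

Section ExtensiveIteration.
Variables (T : finType) (f : {set T} -> {set T}).
Hypothesis f_ext : forall X : {set T}, X \subset f X.

Lemma iter_ext_mono X i j : i <= j -> iter i f X \subset iter j f X.
Proof.
move=> /subnK <-; elim: (j - i) => [|d IH]; first by rewrite add0n.
by rewrite addSn; apply: subset_trans IH (f_ext _).
Qed.

Lemma iter_ext_fixpoint X : f (iter #|T| f X) = iter #|T| f X.
Proof.
suff [i le_iT fix_i] : exists2 i, i <= #|T| & f (iter i f X) = iter i f X.
  by rewrite -(subnK le_iT) iterD iter_fix.
apply: NNPP => no_fix.
have grow i : i <= #|T|.+1 -> i <= #|iter i f X|.
  elim: i => // i IH lt_iT; apply: leq_ltn_trans (IH (ltnW lt_iT)) (proper_card _).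
  rewrite properEneq f_ext andbT eq_sym; apply/eqP => fix_i.
  by apply: no_fix; exists i.
by have := leq_trans (grow _ (leqnn _)) (max_card _); rewrite ltnn.
Qed.

Lemma iter_ext_sub_card X m : iter m f X \subset iter #|T| f X.
Proof.
case: (leqP m #|T|) => [|/ltnW le_Tm]; first exact: iter_ext_mono.
by rewrite -(subnK le_Tm) iterD iter_fix // iter_ext_fixpoint.
Qed.

End ExtensiveIteration.

Section Attractor.
Variables (V : finType) (VO : {set V}).

Definition owns (b : bool) (x : V) : bool := (x \in VO) == b.

Lemma ownsN b x : owns (~~ b) x = ~~ owns b x.
Proof. by rewrite /owns; case: b; case: (x \in VO). Qed.

Variables (b : bool) (e : rel V) (U : {set V}).

Definition astep (X : {set V}) : {set V} :=
  X :|: [set x in U | if owns b x then [exists y, e x y && (y \in X)]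
                      else [forall y, e x y ==> (y \in X)]].

Definition aiter (T : {set V}) (j : nat) : {set V} := iter j astep T.
Definition attr (T : {set V}) : {set V} := aiter T #|V|.

Variable T : {set V}.

Lemma astep_ext (X : {set V}) : X \subset astep X.
Proof. exact: subsetUl. Qed.

Lemma aiter_mono i j : i <= j -> aiter T i \subset aiter T j.
Proof. exact/iter_ext_mono/astep_ext. Qed.

Lemma aiter_sub_attr j : aiter T j \subset attr T.
Proof. exact/iter_ext_sub_card/astep_ext. Qed.

Lemma astep_attr : astep (attr T) = attr T.
Proof. exact/iter_ext_fixpoint/astep_ext. Qed.

Lemma sub_attr : T \subset attr T.
Proof. exact: aiter_sub_attr 0. Qed.

Lemma aiter_sub j : T \subset U -> aiter T j \subset U.
Proof.
move=> sTU; elim: j => //= j IH; apply/subsetP => x.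
by rewrite inE => /orP [/(subsetP IH) | /[!inE] /andP []].
Qed.

Lemma attr_sub : T \subset U -> attr T \subset U.
Proof. exact: aiter_sub. Qed.

Lemma attr_trap x : x \in U -> x \notin attr T ->
  (owns b x -> forall y, e x y -> y \notin attr T) /\
  (~~ owns b x -> exists2 y, e x y & y \notin attr T).
Proof.
move=> xU; rewrite -{1}astep_attr !inE negb_or xU /= => /andP [_].
case: (owns b x) => [/existsPn no_y | /forallPn [y /[!negb_imply] /andP [exy yA]]];
  split => // _; last by exists y.
by move=> y exy; apply/negP => yA; have := no_y y; rewrite exy yA.
Qed.

Lemma astep_cond_spec (X : {set V}) x :
  (if owns b x then [exists y, e x y && (y \in X)] else [forall y, e x y ==> (y \in X)]) ->
  (owns b x -> exists2 y, e x y & y \in X) /\ (~~ owns b x -> forall y, e x y -> y \in X).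
Proof.
case: (owns b x) => [/existsP [y /andP [exy yX]] | /forallP all_y]; split => // _.
  by exists y.
by move=> y exy; have := all_y y; rewrite exy.
Qed.

Lemma aiterS_spec j x : x \in aiter T j.+1 -> x \in T \/
  ((owns b x -> exists2 y, e x y & y \in aiter T j) /\
   (~~ owns b x -> forall y, e x y -> y \in aiter T j)).
Proof.
elim: j x => [|j IH] x; rewrite [aiter T _.+1]iterS {1}/astep in_setU inE.
  by case/orP => [xT | /andP [_ /astep_cond_spec]]; [left | right].
case/orP => [/IH [xT | [own_x other_x]] | /andP [_ /astep_cond_spec]];
  [by left | right | by right].
split=> [/own_x [y exy yj] | /other_x all_y y /all_y]; last exact: (subsetP (astep_ext _)).
by exists y => //; apply: (subsetP (astep_ext _)).
Qed.

Lemma attr_rank x : x \in attr T -> x \notin T -> exists j, x \in aiter T j.+1.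
Proof.
rewrite /attr; case: #|V| => [|m] xA xT; first by rewrite xA in xT.
by exists m.
Qed.

Lemma attractor_strategy : exists a : V -> V, forall x,
  x \in attr T -> x \notin T -> owns b x ->
  e x (a x) /\ forall j, x \in aiter T j.+1 -> a x \in aiter T j.
Proof.
apply: (choice (fun x y => x \in attr T -> x \notin T -> owns b x ->
  e x y /\ forall j, x \in aiter T j.+1 -> y \in aiter T j)) => x.
case: (boolP [&& x \in attr T, x \notin T & owns b x]); last first.
  by move=> /and3P not_cond; exists x => xA xT own_x; case: not_cond.
case/and3P => xA xT own_x; case: (ex_minnP (attr_rank xA xT)) => j xj min_j.
have [|[/(_ own_x) [y exy yj] _]] := aiterS_spec xj; first by rewrite (negbTE xT).
exists y => _ _ _; split => // i xi.
exact: subsetP (aiter_mono (min_j _ xi)) _ yj.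
Qed.

Lemma attr_nonowner_closed x y : x \in attr T -> x \notin T -> ~~ owns b x ->
  e x y -> y \in attr T.
Proof.
move=> xA xT other_x exy; have [j xj] := attr_rank xA xT.
have [|[_ /(_ other_x y exy)]] := aiterS_spec xj; first by rewrite (negbTE xT).
exact: subsetP (aiter_sub_attr j) y.
Qed.

Lemma attractor_move_attr (a : V -> V) x :
  (forall j, x \in aiter T j.+1 -> a x \in aiter T j) ->
  x \in attr T -> x \notin T -> a x \in attr T.
Proof.
move=> a_down xA xT; have [j /a_down] := attr_rank xA xT.
exact: subsetP (aiter_sub_attr j) _.
Qed.

Lemma attr_reach (a : V -> V) (pi : nat -> V) :
  (forall x, x \in attr T -> x \notin T -> owns b x ->
     forall j, x \in aiter T j.+1 -> a x \in aiter T j) ->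
  (forall i, e (pi i) (pi i.+1)) ->
  (forall i, pi i \in attr T -> pi i \notin T -> owns b (pi i) -> pi i.+1 = a (pi i)) ->
  forall j i, pi i \in aiter T j -> exists2 i', i <= i' & pi i' \in T.
Proof.
move=> a_down epi follow_a; elim=> [|j IH] i pij; first by exists i.
case: (boolP (pi i \in T)) => [piT | piT]; first by exists i.
suff /IH [i' le_i' pi'T] : pi i.+1 \in aiter T j by exists i'; first exact: ltnW.
have piA : pi i \in attr T := subsetP (aiter_sub_attr _) _ pij.
have [|[own_pi other_pi]] := aiterS_spec pij; first by rewrite (negbTE piT).
case: (boolP (owns b (pi i))) => own_i; last exact: other_pi.
by rewrite (follow_a _ piA piT own_i); apply: a_down.
Qed.

End Attractor.

Lemma inf_often_or_eventually_not (T : Type) (P : T -> bool) (pi : nat -> T) :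
  (forall N, exists2 i, N <= i & P (pi i)) \/ exists N, forall i, N <= i -> ~~ P (pi i).
Proof.
case: (classic (exists N, forall i, N <= i -> ~~ P (pi i))) => [|no_bound]; first by right.
left=> N; apply: NNPP => no_i; apply: no_bound; exists N => i le_Ni.
by apply/negP => Pi; apply: no_i; exists i.
Qed.

Lemma attr_reach_inf (V : finType) (VO : {set V}) b e U T (a : V -> V) (pi : nat -> V) :
  (forall x, x \in attr VO b e U T -> x \notin T -> owns VO b x ->
     forall j, x \in aiter VO b e U T j.+1 -> a x \in aiter VO b e U T j) ->
  (forall i, e (pi i) (pi i.+1)) ->
  (forall i, pi i \in attr VO b e U T -> pi i \notin T -> owns VO b (pi i) ->
     pi i.+1 = a (pi i)) ->
  (forall N, exists2 i, N <= i & pi i \in attr VO b e U T) ->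
  forall N, exists2 i, N <= i & pi i \in T.
Proof.
move=> a_down epi follow_a inf_A N; have [i le_Ni piA] := inf_A N.
have [i' le_ii' pi'T] := attr_reach a_down epi follow_a piA.
by exists i' => //; apply: leq_trans le_ii'.
Qed.

Lemma odd_wins_eq (V : finType) (f g : V -> nat) (pi : nat -> V) :
  (forall i, f (pi i) = g (pi i)) -> odd_wins f pi -> odd_wins g pi.
Proof.
move=> eq_fg [q [odd_q inf_q [N ge_q]]]; exists q; split => //.
  by move=> M; have [i le_Mi f_q] := inf_q M; exists i; rewrite -?eq_fg.
by exists N => i le_Ni; rewrite -eq_fg; apply: ge_q.
Qed.

Section Plays.
Variables (V : finType) (E : rel V) (p : V -> nat) (VO : {set V}).
Implicit Types (U W X : {set V}) (b : bool) (pi : nat -> V) (s : V -> V).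
Local Notation owns := (owns VO).

(* Player [true] is Odd, player [false] is Even. *)
Definition wins_play b pi : Prop := if b then odd_wins p pi else ~ odd_wins p pi.

Definition play_in U pi : Prop := forall i, pi i \in U /\ E (pi i) (pi i.+1).
Definition follows b s pi : Prop := forall i, owns b (pi i) -> pi i.+1 = s (pi i).

Definition closed_in b U W s : Prop := forall x, x \in W ->
  (owns b x -> E x (s x) /\ s x \in W) /\
  (~~ owns b x -> forall y, y \in U -> E x y -> y \in W).

Definition winning_in b U W s : Prop := forall pi,
  play_in U pi -> follows b s pi -> pi 0 \in W -> wins_play b pi.

Definition total_in U : Prop := forall x, x \in U -> exists2 y, y \in U & E x y.

Definition shift pi N : nat -> V := fun i => pi (N + i).

Lemma odd_wins_shift pi N : odd_wins p (shift pi N) <-> odd_wins p pi.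
Proof.
rewrite /odd_wins /shift; split=> -[q [odd_q inf_q [M ge_q]]]; exists q; split => //.
- move=> N'; have [i le_i pi_q] := inf_q N'.
  by exists (N + i) => //; apply: leq_trans le_i (leq_addl _ _).
- exists (N + M) => i le_i; rewrite -(subnKC (leq_trans (leq_addr M N) le_i)).
  by apply: ge_q; rewrite leq_subRL // (leq_trans (leq_addr M N) le_i).
- move=> N'; have [i le_i pi_q] := inf_q (N + N').
  have le_Ni := leq_trans (leq_addr N' N) le_i.
  by exists (i - N); rewrite ?leq_subRL ?subnKC.
- by exists M => i le_i; apply: ge_q; apply: leq_trans le_i (leq_addl _ _).
Qed.

Lemma wins_play_shift b pi N : wins_play b (shift pi N) <-> wins_play b pi.
Proof. by case: b => /=; rewrite odd_wins_shift. Qed.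

Lemma follows_shift b s pi N : follows b s pi -> follows b s (shift pi N).
Proof. by move=> follow_s i; rewrite /shift addnS; apply: follow_s. Qed.

Lemma play_in_shift U X pi N : play_in U pi -> (forall i, N <= i -> pi i \in X) ->
  play_in (U :&: X) (shift pi N).
Proof.
move=> play_pi inX i; rewrite /shift addnS; have [piU Epi] := play_pi (N + i).
by rewrite inE piU inX ?leq_addr.
Qed.

Lemma wins_play_min_prio pi q : (forall i, q <= p (pi i)) ->
  (forall N, exists2 i, N <= i & p (pi i) = q) -> wins_play (odd q) pi.
Proof.
move=> ge_q inf_q; case odd_q: (odd q) => /=; first by exists q; split => //; exists 0.
move=> [q' [odd_q' inf_q' [M ge_q']]].
have [i /ge_q' le_q'i pi_q] := inf_q M; have [j _ pj_q'] := inf_q' 0.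
have eq_qq' : q = q' by apply/eqP; rewrite eqn_leq -{1}pj_q' ge_q -pi_q.
by rewrite eq_qq' odd_q' in odd_q.
Qed.

Lemma closed_in_stay b U W s pi : closed_in b U W s -> play_in U pi ->
  follows b s pi -> pi 0 \in W -> forall i, pi i \in W.
Proof.
move=> closedW play_pi follow_s pi0W; elim=> // i piW.
have [own_move other_move] := closedW _ piW; have [_ Epi] := play_pi i.
case: (boolP (owns b (pi i))) => [own_i | other_i].
  by rewrite follow_s //; case: (own_move own_i).
by apply: other_move => //; case: (play_pi i.+1).
Qed.

Lemma closed_in_eq b U W s s' : {in W, s =1 s'} -> closed_in b U W s -> closed_in b U W s'.
Proof. by move=> eq_s closedW x xW; rewrite -eq_s //; apply: closedW. Qed.

Lemma winning_in_eq b U W s s' : closed_in b U W s -> {in W, s =1 s'} ->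
  winning_in b U W s -> winning_in b U W s'.
Proof.
move=> closedW eq_s winW pi play_pi follow_s' pi0W; apply: winW => // i own_i.
have closedW' := closed_in_eq eq_s closedW.
by rewrite eq_s ?follow_s' // (closed_in_stay closedW' play_pi follow_s').
Qed.

Lemma winning_in_sub b U U' W s : closed_in b U W s -> W \subset U' ->
  winning_in b U' W s -> winning_in b U W s.
Proof.
move=> closedW sWU' winW pi play_pi follow_s pi0W; apply: winW => // i.
have stay := closed_in_stay closedW play_pi follow_s pi0W.
by split; [apply: (subsetP sWU') | case: (play_pi i)].
Qed.

Definition E_in U : rel V := [rel x y | E x y && (y \in U)].
Definition arena_attr b U X := attr VO b (E_in U) U X.

Lemma E_inE U x y : E_in U x y = E x y && (y \in U).
Proof. by []. Qed.

Lemma arena_attr_trap b U X x : x \in U -> x \notin arena_attr b U X ->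
  (owns b x -> forall y, y \in U -> E x y -> y \notin arena_attr b U X) /\
  (~~ owns b x -> exists2 y, y \in U :\: arena_attr b U X & E x y).
Proof.
move=> xU xA; have [own_move other_move] := attr_trap xU xA; split.
  by move=> own_x y yU Exy; apply: own_move => //=; apply/andP.
by move=> /other_move [y /andP [Exy yU] yA]; exists y; rewrite // inE yA.
Qed.

Lemma total_in_attr_compl b U X : total_in U -> total_in (U :\: arena_attr b U X).
Proof.
move=> totU x /setDP [xU xA]; have [own_move other_move] := arena_attr_trap xU xA.
case: (boolP (owns b x)) => [own_x | /other_move //].
have [y yU Exy] := totU x xU; exists y => //.
by rewrite inE yU (own_move own_x).
Qed.

Lemma closed_in_attr_compl b U X W s : W \subset U :\: arena_attr b U X ->
  closed_in (~~ b) (U :\: arena_attr b U X) W s -> closed_in (~~ b) U W s.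
Proof.
move=> sWU' closedW x xW; have [own_move other_move] := closedW x xW.
split=> // not_own y yU Exy; apply: other_move => //.
have own_x : owns b x by rewrite -[b]negbK ownsN.
have /setDP [xU xA] := subsetP sWU' x xW.
by rewrite inE yU (arena_attr_trap xU xA).1.
Qed.

End Plays.

Lemma eq_bool_or_neg (c b : bool) : c = b \/ c = ~~ b.
Proof. by case: c; case: b; auto. Qed.

Lemma negb_eq_self b : (~~ b == b) = false.
Proof. by case: b. Qed.

(** * Positional determinacy *)

Section Zielonka.
Variables (V : finType) (E : rel V) (p : V -> nat) (VO : {set V}).
Implicit Types (U X : {set V}) (b : bool) (pi : nat -> V).
Implicit Types (W : bool -> {set V}) (s : bool -> V -> V).
Local Notation owns := (owns VO).
Local Notation closed_in := (closed_in E VO).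
Local Notation winning_in := (winning_in E p VO).
Local Notation play_in := (play_in E).
Local Notation total_in := (total_in E).
Local Notation arena_attr := (arena_attr E VO).

Definition solves U W s : Prop :=
  forall b, [/\ U = W b :|: W (~~ b), [disjoint W b & W (~~ b)],
                closed_in b U (W b) (s b) & winning_in b U (W b) (s b)].

Lemma solves_set0 : solves set0 (fun _ => set0) (fun _ x => x).
Proof.
move=> b; split; rewrite ?setU0 ?disjoints_subset ?sub0set //; first by move=> x; rewrite inE.
by move=> pi _ _; rewrite inE.
Qed.

Lemma solves_sub U W s b : solves U W s -> W b \subset U.
Proof. by move=> /(_ b) [-> _ _ _]; apply: subsetUl. Qed.

Lemma solves_disj U W s b x : solves U W s -> x \in W b -> x \notin W (~~ b).
Proof. by move=> /(_ b) [_ /disjointFr disjW _ _] /disjW ->. Qed.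

Lemma solves_by_player U b W s :
  U = W b :|: W (~~ b) -> [disjoint W b & W (~~ b)] ->
  (forall c, closed_in c U (W c) (s c) /\ winning_in c U (W c) (s c)) ->
  solves U W s.
Proof.
move=> partU disjW players c; have [closedW winW] := players c.
by have [eq_cb | eq_cb] := eq_bool_or_neg c b; rewrite eq_cb in closedW winW *;
  [split | rewrite negbK setUC disjoint_sym; split].
Qed.

Section Step.
Variables (U : {set V}) (q : nat).
Hypotheses (totU : total_in U) (q_min : forall x, x \in U -> q <= p x).
Let b := odd q.
Let T := [set x in U | p x == q].
Let A := arena_attr b U T.
Variables (W1 : bool -> {set V}) (s1 : bool -> V -> V).
Hypothesis solves1 : solves (U :\: A) W1 s1.

Section PlayerStrategy.
Variables (nx a : V -> V).
Hypothesis nxP : forall x, x \in U -> nx x \in U /\ E x (nx x).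
Hypothesis aP : forall x, x \in A -> x \notin T -> owns b x ->
  E_in E U x (a x) /\
  forall j, x \in aiter VO b (E_in E U) U T j.+1 -> a x \in aiter VO b (E_in E U) U T j.
Hypothesis W1_opp_empty : W1 (~~ b) = set0.

Definition player_strategy x := if x \in A then (if x \in T then nx x else a x) else s1 b x.

Lemma W1_player : W1 b = U :\: A.
Proof. by have [-> _ _ _] := solves1 b; rewrite W1_opp_empty setU0. Qed.

Lemma closed_in_player : closed_in b U U player_strategy.
Proof.
move=> x xU; split => // own_x; rewrite /player_strategy.
case: (boolP (x \in A)) => xA; first case: (boolP (x \in T)) => xT.
- by case: (nxP xU).
- by have [/andP [Exa aU] _] := aP xA xT own_x.
have xW1 : x \in W1 b by rewrite W1_player inE xA.
have [_ _ closedW1 _] := solves1 b; have [Es s1W1] := (closedW1 x xW1).1 own_x.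
by split => //; move: s1W1; rewrite W1_player => /setDP [].
Qed.

Lemma winning_in_player : winning_in b U U player_strategy.
Proof.
move=> pi play_pi follow pi0U.
have [inf_A | [N out_A]] := inf_often_or_eventually_not (fun x => x \in A) pi.
  apply: wins_play_min_prio => [i | N]; first by apply: q_min; case: (play_pi i).
  have [|||i le_Ni] := @attr_reach_inf _ VO b (E_in E U) U T a pi _ _ _ inf_A N.
  - by move=> x xA xT own_x; have [_] := aP xA xT own_x.
  - by move=> i; case: (play_pi i) => _ Epi; rewrite E_inE Epi; case: (play_pi i.+1).
  - by move=> i piA piT own_i; rewrite (follow _ own_i) /player_strategy piA (negbTE piT).
  by rewrite inE => /andP [_ /eqP]; exists i.
apply/(wins_play_shift _ _ _ N); have [_ _ _ winW1] := solves1 b; apply: winW1.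
- by rewrite setDE; apply: play_in_shift => // i le_Ni; rewrite inE out_A.
- move=> i own_i; rewrite /shift addnS follow //.
  by rewrite /player_strategy (negbTE (out_A _ _)) // leq_addr.
by rewrite /shift addn0 W1_player inE out_A //; case: (play_pi N).
Qed.

End PlayerStrategy.

Lemma solves_when_opponent_loses : W1 (~~ b) = set0 -> exists W s, solves U W s.
Proof.
move=> W1_opp_empty.
have [nx nxP] : exists nx : V -> V, forall x, x \in U -> nx x \in U /\ E x (nx x).
  apply: (choice (fun x y => x \in U -> y \in U /\ E x y)) => x.
  by case: (boolP (x \in U)) => [/totU [y] | _]; [exists y | exists x].
have [a aP] := attractor_strategy VO b (E_in E U) U T.
exists (fun c => if c == b then U else set0), (fun _ => player_strategy nx a).
apply: (@solves_by_player _ b); rewrite ?eqxx ?negb_eq_self.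
- by rewrite setU0.
- by rewrite disjoints_subset setC0 subsetT.
move=> c; have [-> | ->] := eq_bool_or_neg c b; rewrite ?eqxx ?negb_eq_self.
  by split; [apply: closed_in_player | apply: winning_in_player].
by split => [x | pi _ _]; rewrite inE.
Qed.

Let B := arena_attr (~~ b) U (W1 (~~ b)).
Variables (W2 : bool -> {set V}) (s2 : bool -> V -> V).
Hypothesis solves2 : solves (U :\: B) W2 s2.

Lemma W1_opp_sub_B : W1 (~~ b) \subset B.
Proof. exact: sub_attr. Qed.

Lemma B_sub_U : B \subset U.
Proof.
apply: attr_sub; apply: subset_trans (solves_sub (~~ b) solves1) _.
exact: subsetDl.
Qed.

Lemma closed_in_W1_opp : closed_in (~~ b) U (W1 (~~ b)) (s1 (~~ b)).
Proof.
have [_ _ closedW1 _] := solves1 (~~ b).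
exact: closed_in_attr_compl (solves_sub _ solves1) closedW1.
Qed.

Lemma winning_in_W1_opp : winning_in (~~ b) U (W1 (~~ b)) (s1 (~~ b)).
Proof.
have [_ _ _ winW1] := solves1 (~~ b).
exact: winning_in_sub closed_in_W1_opp (solves_sub _ solves1) winW1.
Qed.

Section OpponentStrategy.
Variable a2 : V -> V.
Hypothesis a2P : forall x, x \in B -> x \notin W1 (~~ b) -> owns (~~ b) x ->
  E_in E U x (a2 x) /\
  forall j, x \in aiter VO (~~ b) (E_in E U) U (W1 (~~ b)) j.+1 ->
    a2 x \in aiter VO (~~ b) (E_in E U) U (W1 (~~ b)) j.

Definition opp_strategy x :=
  if x \in W1 (~~ b) then s1 (~~ b) x else if x \in B then a2 x else s2 (~~ b) x.

Lemma opp_strategy_W1 : {in W1 (~~ b), s1 (~~ b) =1 opp_strategy}.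
Proof. by move=> x xW1; rewrite /opp_strategy xW1. Qed.

Lemma closed_in_opp_region : closed_in (~~ b) U (W2 (~~ b) :|: B) opp_strategy.
Proof.
move=> x /setUP xWB; case: (boolP (x \in W1 (~~ b))) => xW1.
  have [own_move other_move] := closed_in_eq opp_strategy_W1 closed_in_W1_opp xW1.
  have inB y : y \in W1 (~~ b) -> y \in W2 (~~ b) :|: B.
    by move=> /(subsetP W1_opp_sub_B) yB; rewrite inE yB orbT.
  split=> [/own_move [Ex /inB] | /other_move other_x y yU /(other_x y yU) /inB] //.
case: (boolP (x \in B)) => xB.
  split=> [own_x | other_x y yU Exy]; rewrite inE.
    have [/andP [Ex _] a2_down] := a2P xB xW1 own_x.
    by rewrite /opp_strategy (negbTE xW1) xB Ex (attractor_move_attr a2_down) ?orbT.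
  by rewrite (attr_nonowner_closed xB xW1 other_x) ?orbT // E_inE Exy.
have xW2 : x \in W2 (~~ b) by case: xWB => //; rewrite (negbTE xB).
have [_ _ closedW2 _] := solves2 (~~ b); have [own_move other_move] := closedW2 x xW2.
split=> [own_x | other_x y yU Exy].
  by rewrite /opp_strategy (negbTE xW1) (negbTE xB) inE; case: (own_move own_x) => -> ->.
rewrite inE; case: (boolP (y \in B)) => yB; rewrite ?orbT // orbF.
by apply: other_move; rewrite // inE yB.
Qed.

Lemma winning_in_opp_region : winning_in (~~ b) U (W2 (~~ b) :|: B) opp_strategy.
Proof.
move=> pi play_pi follow_opp pi0WB.
have stayWB := closed_in_stay closed_in_opp_region play_pi follow_opp pi0WB.
case: (classic (exists N, pi N \in W1 (~~ b))) => [[N piNW1] | never_W1].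
  apply/(wins_play_shift _ _ _ N); apply: (winning_in_eq closed_in_W1_opp
    opp_strategy_W1 winning_in_W1_opp) => //; last by rewrite /shift addn0.
  - by move=> i; rewrite /shift addnS; apply: play_pi.
  - exact: follows_shift.
have never_B i : pi i \notin B.
  apply/negP => piB; apply: never_W1.
  have [|||j _ pijW1] := attr_reach (a := a2) (pi := pi) _ _ _ piB.
  - by move=> x xB xW1 own_x; have [_] := a2P xB xW1 own_x.
  - by move=> j; have [_ Epi] := play_pi j; rewrite E_inE Epi; case: (play_pi j.+1).
  - move=> j pijB pijW1 own_j; have pijB' : pi j \in B := pijB.
    by rewrite follow_opp // /opp_strategy (negbTE pijW1) pijB'.
  by exists j.
have stayW2 i : pi i \in W2 (~~ b).
  by have /setUP [//|] := stayWB i; rewrite (negbTE (never_B i)).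
have [_ _ _ winW2] := solves2 (~~ b); apply: winW2 => // [i | i own_i].
  by split; [apply: (subsetP (solves_sub _ solves2)) | case: (play_pi i)].
rewrite follow_opp // /opp_strategy (negbTE (never_B i)).
by case: ifP => // piW1; case: never_W1; exists i.
Qed.

End OpponentStrategy.

Lemma solves_with_opponent_attr : exists W s, solves U W s.
Proof.
have [a2 a2P] := attractor_strategy VO (~~ b) (E_in E U) U (W1 (~~ b)).
exists (fun c => if c == b then W2 b else W2 (~~ b) :|: B).
exists (fun c => if c == b then s2 b else opp_strategy a2).
have [partU2 disjW2 closedW2 winW2] := solves2 b.
apply: (@solves_by_player _ b); rewrite ?eqxx ?negb_eq_self.
- rewrite setUA -partU2; apply/setP => x; rewrite !inE.
  by case: (boolP (x \in B)) => [/(subsetP B_sub_U) -> | _]; rewrite ?orbT ?orbF.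
- rewrite disjoints_subset setCU subsetI -disjoints_subset disjW2 /=.
  by apply: subset_trans (solves_sub b solves2) _; rewrite setDE subsetIr.
move=> c; have [-> | ->] := eq_bool_or_neg c b; rewrite ?eqxx ?negb_eq_self; last first.
  by split; [apply: closed_in_opp_region | apply: winning_in_opp_region].
have closedW2U : closed_in b U (W2 b) (s2 b).
  have := @closed_in_attr_compl _ E VO (~~ b) U (W1 (~~ b)) (W2 b) (s2 b).
  by rewrite negbK; apply; [apply: solves_sub solves2 | ].
by split; last exact: winning_in_sub closedW2U (solves_sub _ solves2) winW2.
Qed.

End Step.

Theorem zielonka U : total_in U -> exists W s, solves U W s.
Proof.
move: {2}#|U| (leqnn #|U|) => n; elim: n U => [|n IH] U leUn totU.
  move: leUn; rewrite leqn0 cards_eq0 => /eqP ->.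
  by exists (fun _ => set0), (fun _ x => x); apply: solves_set0.
have [-> | [x0 x0U]] := set_0Vmem U.
  by exists (fun _ => set0), (fun _ x => x); apply: solves_set0.
have [xq xqU q_min] := @arg_minnP _ x0 (fun x => x \in U) p x0U.
have shrink X x : x \in U -> x \in X -> #|U :\: X| <= n.
  move=> xU xX; rewrite -ltnS; apply: leq_trans leUn; apply: proper_card.
  by apply/properP; split; [apply: subsetDl | exists x; rewrite // inE xX].
set A := arena_attr (odd (p xq)) U [set x in U | p x == p xq].
have xqA : xq \in A by apply: (subsetP (sub_attr _ _ _ _ _)); rewrite inE xqU eqxx.
have [W1 [s1 solves1]] := IH _ (shrink A xq xqU xqA) (total_in_attr_compl totU).
case: (eqVneq (W1 (~~ odd (p xq))) set0) => [W1_empty | /set0Pn [x1 x1W1]].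
  exact: solves_when_opponent_loses W1_empty.
set B := arena_attr (~~ odd (p xq)) U (W1 (~~ odd (p xq))).
have x1U : x1 \in U.
  by have /setDP [] := subsetP (solves_sub _ solves1) _ x1W1.
have [W2 [s2 solves2]] := IH _ (shrink B x1 x1U (subsetP (sub_attr _ _ _ _ _) _ x1W1))
  (total_in_attr_compl totU).
exact: solves_with_opponent_attr solves2.
Qed.

End Zielonka.

(** * Measures and lifting sequences *)

Section Lexicographic.
Implicit Types (s t u : seq nat).

Lemma lexle_refl s : lexle s s.
Proof. by elim: s => //= x s ->; rewrite eqxx orbT. Qed.

Lemma lexle_trans s t u : lexle s t -> lexle t u -> lexle s u.
Proof.
elim: s t u => [|x s IH] [|y t] [|z u] //=.
case/orP => [lt_xy | /andP [/eqP <- le_st]] /orP [lt_yz | /andP [/eqP <- le_tu]].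
- by rewrite (ltn_trans lt_xy lt_yz).
- by rewrite lt_xy.
- by rewrite lt_yz.
- by rewrite eqxx (IH _ _ le_st le_tu) orbT.
Qed.

Lemma lexle_lt_trans s t u : size s = size t -> lexle s t -> lexlt t u -> lexlt s u.
Proof.
elim: s t u => [|x s IH] [|y t] [|z u] //= [eq_st].
case/orP => [lt_xy | /andP [/eqP <- le_st]] /orP [lt_yz | /andP [/eqP <- lt_tu]].
- by rewrite (ltn_trans lt_xy lt_yz).
- by rewrite lt_xy.
- by rewrite lt_yz.
- by rewrite eqxx (IH _ _ eq_st le_st lt_tu) orbT.
Qed.

Lemma lexle_anti s t : size s = size t -> lexle s t -> lexle t s -> s = t.
Proof.
elim: s t => [|x s IH] [|y t] //= [eq_st].
case/orP => [lt_xy | /andP [/eqP eq_xy le_st]] /orP [lt_yx | /andP [/eqP eq_yx le_ts]].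
- by move: (ltn_trans lt_xy lt_yx); rewrite ltnn.
- by move: lt_xy; rewrite eq_yx ltnn.
- by move: lt_yx; rewrite eq_xy ltnn.
- by rewrite eq_xy (IH _ eq_st le_st le_ts).
Qed.

Lemma lexle_total s t : size s = size t -> lexle s t || lexle t s.
Proof.
elim: s t => [|x s IH] [|y t] //= [eq_st].
by have [lt_xy | lt_yx | eq_xy] := ltngtP x y => //=; apply: IH.
Qed.

Lemma lexle_take i s t : lexle s t -> lexle (take i s) (take i t).
Proof.
elim: i s t => [|i IH] [|x s] [|y t] //=.
by case/orP => [-> // | /andP [-> /IH ->]]; rewrite orbT.
Qed.

Lemma lexle_pointwise s t : size s = size t ->
  (forall i, nth 0 s i <= nth 0 t i) -> lexle s t.
Proof.
elim: s t => [|x s IH] [|y t] //= [eq_st] le_st.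
have /= := le_st 0; rewrite leq_eqVlt => /orP [/eqP -> | -> //].
by rewrite eqxx IH ?orbT // => i; apply: (le_st i.+1).
Qed.

Lemma lexlt_pointwise s t : size s = size t ->
  (forall i, nth 0 s i <= nth 0 t i) -> (exists i, nth 0 s i < nth 0 t i) -> lexlt s t.
Proof.
elim: s t => [|x s IH] [|y t] //=; first by move=> _ _ [i]; rewrite nth_nil.
move=> [eq_st] le_st [i lt_i]; have /= := le_st 0; rewrite leq_eqVlt => /orP [/eqP eq_xy | -> //].
rewrite eq_xy eqxx IH ?orbT // => [j | ]; first exact: (le_st j.+1).
by case: i lt_i => [|i] /= lt_i; [rewrite eq_xy ltnn in lt_i | exists i].
Qed.

End Lexicographic.

Lemma nth_take_if n s i : nth 0 (take n s) i = if i < n then nth 0 s i else 0.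
Proof.
case: (ltnP i n) => lt_in; first by rewrite nth_take.
rewrite nth_default // size_take; case: ltnP => // le_sn.
exact: leq_trans le_sn lt_in.
Qed.

Lemma nth_mkseq_if (f : nat -> nat) d i : nth 0 (mkseq f d) i = if i < d then f i else 0.
Proof. by case: ltnP => h; [rewrite nth_mkseq | rewrite nth_default // size_mkseq]. Qed.

Lemma list_has_least (T : Type) (le : T -> T -> bool) (P : T -> bool) (l : list T) :
  (forall x y, P x -> P y -> le x y || le y x) ->
  (forall x y z, le x y -> le y z -> le x z) ->
  (forall x, le x x) ->
  (exists x, List.In x l /\ P x) ->
  exists x, [/\ P x, List.In x l & forall y, List.In y l -> P y -> le x y].
Proof.
move=> le_total le_trans le_refl; elim: l => [[x []] // | a l IH [x [x_al Px]]].
have [/IH [m [Pm m_l m_least]] | no_l] := classic (exists x, List.In x l /\ P x).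
  have [Pa | nPa] := boolP (P a); last first.
    exists m; split=> //; first by right.
    by move=> y [<- | y_l] Py; [rewrite Py in nPa | apply: m_least].
  have [le_am | nle_am] := boolP (le a m).
    exists a; split=> //; first by left.
    by move=> y [<- // | y_l Py]; apply: le_trans le_am (m_least _ y_l Py).
  exists m; split => //; first by right.
  move=> y [<- | y_l]; last exact: m_least.
  by move=> _; have := le_total _ _ Pa Pm; rewrite (negbTE nle_am).
case: x_al => [eq_ax | x_l]; last by case: no_l; exists x.
exists a; rewrite eq_ax; split => //; first by left.
by move=> y [<- // | y_l Py]; case: no_l; exists y.
Qed.

Section Measures.
Variables (V : finType) (p : V -> nat).
Implicit Types (a b c m : meas) (s t : seq nat).
Local Notation inM := (inM p).
Local Notation dim := (dim p).

(* [prog_cond rho v w m] depends only on [p v] and [rho w]. *)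
Definition progc q a m : bool :=
  if odd q then mlt_i q a m || (is_top m && is_top a) else mle_i q a m.

Lemma prog_condE (rho : V -> meas) x w m : prog_cond p rho x w m = progc (p x) (rho w) m.
Proof. by []. Qed.

Lemma prio_lt_dim x : p x < dim.
Proof. by rewrite ltnS; apply: (@leq_bigmax_cond _ predT). Qed.

Lemma inM_size s : inM (Tup s) -> size s = dim.
Proof. by case/andP => /eqP. Qed.

Lemma inM_nth s i : inM (Tup s) -> nth 0 s i <= (if odd i then #|Vpr p i| else 0).
Proof.
case/andP => /eqP size_s /allP in_range.
case: (ltnP i dim) => [lt_id | ?]; last by rewrite nth_default // size_s.
by have := in_range i; rewrite mem_iota lt_id => /(_ isT); case: (odd i) => // /eqP ->.
Qed.

Lemma inM_Tup s : size s = dim ->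
  (forall i, i < dim -> nth 0 s i <= (if odd i then #|Vpr p i| else 0)) -> inM (Tup s).
Proof.
move=> size_s in_range; apply/andP; split; first by rewrite size_s.
apply/allP => i; rewrite mem_iota /= => /in_range.
by case: (odd i) => //; rewrite leqn0.
Qed.

Lemma mle_refl a : mle a a.
Proof. by case: a => //= s; apply: lexle_refl. Qed.

Lemma mle_trans a b c : mle a b -> mle b c -> mle a c.
Proof. by case: a; case: b; case: c => //= ? ? ?; apply: lexle_trans. Qed.

Lemma mle_total a b : inM a -> inM b -> mle a b || mle b a.
Proof.
case: a; case: b => //= s t /inM_size size_t /inM_size size_s.
by apply: lexle_total; rewrite size_s size_t.
Qed.

Lemma mle_i_of q a b : mle a b -> mle_i q a b.
Proof. by case: a; case: b => //= s t; apply: lexle_take. Qed.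

Lemma mle_i_trans q a b c : mle_i q a b -> mle_i q b c -> mle_i q a c.
Proof. by case: a; case: b; case: c => //= u t s; apply: lexle_trans. Qed.

Lemma mle_mlt_i_trans q a b c : inM a -> inM b -> mle_i q a b -> mlt_i q b c -> mlt_i q a c.
Proof.
case: a; case: b; case: c => //= u t s /inM_size size_s /inM_size size_t.
by apply: lexle_lt_trans; rewrite !size_take size_s size_t.
Qed.

Lemma progc_antimono q a b m : inM a -> inM b -> mle a b -> progc q b m -> progc q a m.
Proof.
move=> inMa inMb le_ab; rewrite /progc; case: (odd q); last exact: mle_i_trans (mle_i_of q le_ab).
case/orP => [lt_bm | /andP [top_m top_b]].
  by rewrite (mle_mlt_i_trans inMa inMb (mle_i_of q le_ab) lt_bm).
by case: m top_m => // _; case: a {inMa le_ab}.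
Qed.

Lemma mmax_cases a b : mmax a b = a \/ mmax a b = b.
Proof. by rewrite /mmax; case: (mle a b); auto. Qed.

Lemma mmax_le a b c : mle a c -> mle b c -> mle (mmax a b) c.
Proof. by rewrite /mmax; case: (mle a b). Qed.

Lemma mle_mmaxl a b : mle a (mmax a b).
Proof. by rewrite /mmax; case: ifP => //; rewrite mle_refl. Qed.

Fixpoint bounded_seqs (d B : nat) : seq (seq nat) :=
  if d is d'.+1 then flatten [seq [seq x :: t | t <- bounded_seqs d' B] | x <- iota 0 B.+1]
  else [:: [::]].

Lemma mem_bounded_seqs B s : all (fun x => x <= B) s -> s \in bounded_seqs (size s) B.
Proof.
elim: s => [|x s IH] // /andP [le_xB /IH s_in].
apply/flattenP; exists [seq x :: t | t <- bounded_seqs (size s) B]; last exact: map_f.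
by apply/mapP; exists x; rewrite // mem_iota add0n ltnS.
Qed.

Lemma mem_In (T : eqType) (x : T) (s : seq T) : x \in s -> List.In x s.
Proof. by elim: s => //= y s IH; rewrite in_cons => /orP [/eqP -> | /IH]; auto. Qed.

(* Every measure in M has entries at most #|V|. *)
Definition measures : seq meas := Top :: map Tup (bounded_seqs dim #|V|).

Lemma in_measures m : inM m -> List.In m measures.
Proof.
case: m => [s inMs|]; last by left.
right; apply/List.in_map/mem_In; rewrite -(inM_size inMs); apply: mem_bounded_seqs.
apply/(all_nthP 0) => i _; apply: leq_trans (inM_nth i inMs) _.
by case: (odd i) => //; apply: max_card.
Qed.

Lemma prog_exists (rho : V -> meas) x w : exists m, is_prog p rho x w m.
Proof.
have [||||m [/andP [inMm cond_m] _ m_least]] := @list_has_least _ mle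
  (fun m => inM m && prog_cond p rho x w m) measures.
- by move=> a b /andP [inMa _] /andP [inMb _]; apply: mle_total.
- exact: mle_trans.
- exact: mle_refl.
- by exists Top; split; [left | rewrite /= /prog_cond; case: (odd _); case: (rho w)].
exists m; split => // m' inMm' cond_m'.
by apply: m_least; [apply: in_measures | rewrite inMm' cond_m'].
Qed.

Definition zero_above q s := take q.+1 s ++ nseq (size s - q.+1) 0.

Lemma size_zero_above q s : size (zero_above q s) = size s.
Proof.
rewrite size_cat size_take size_nseq; case: ltnP => [/ltnW /subnKC // | le_sq].
by move: le_sq; rewrite -subn_eq0 => /eqP ->; rewrite addn0.
Qed.

Lemma nth_zero_above q s i : nth 0 (zero_above q s) i = if i <= q then nth 0 s i else 0.
Proof.
rewrite nth_cat nth_take_if nth_nseq if_same size_take ltnS.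
case: (leqP i q) => [le_iq | _]; last by case: ifP.
case: (ltnP q.+1 (size s)) => [_ | _]; first by rewrite ltnS le_iq.
by case: ltnP => // le_si; rewrite nth_default.
Qed.

Lemma take_zero_above q s : take q.+1 (zero_above q s) = take q.+1 s.
Proof.
apply: (@eq_from_nth nat 0) => [|i _]; first by rewrite !size_take size_zero_above.
by rewrite !nth_take_if nth_zero_above ltnS; case: (i <= q).
Qed.

Lemma inM_zero_above q s : inM (Tup s) -> inM (Tup (zero_above q s)).
Proof.
move=> inMs; apply: inM_Tup => [|i _]; first by rewrite size_zero_above (inM_size inMs).
by rewrite nth_zero_above; case: ifP => _; [apply: inM_nth | case: (odd i)].
Qed.

Lemma prog_zero_above (rho : V -> meas) x w s :
  is_prog p rho x w (Tup s) -> forall i, p x < i -> nth 0 s i = 0.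
Proof.
case=> inMs cond_s s_least i lt_xi.
have cond_z : prog_cond p rho x w (Tup (zero_above (p x) s)).
  move: cond_s; rewrite /prog_cond.
  by case: (odd _); case: (rho w) => //= t; rewrite take_zero_above.
have le_zs : lexle (zero_above (p x) s) s.
  apply: lexle_pointwise => [|j]; first by rewrite size_zero_above.
  by rewrite nth_zero_above; case: ifP.
have eq_sz := lexle_anti (esym (size_zero_above _ _))
  (s_least _ (inM_zero_above _ inMs) cond_z) le_zs.
by rewrite eq_sz nth_zero_above leqNgt lt_xi.
Qed.

End Measures.

Section LiftingSequence.
Variables (V : finType) (E : rel V) (p : V -> nat) (VO : {set V}).
Variables (rhos : nat -> V -> meas) (vs : nat -> V) (n : nat).
Hypothesis lifting : lifting_seq E p VO rhos vs n.

Lemma lift_step j : j < n ->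
  (forall u, u != vs j -> rhos j.+1 u = rhos j u) /\
  exists X, [/\ if vs j \in VO then is_max (prog_val E p (rhos j) (vs j)) X
                else is_min (prog_val E p (rhos j) (vs j)) X,
              prog_val E p (rhos j) (vs j) X &
              rhos j.+1 (vs j) = mmax (rhos j (vs j)) X].
Proof.
move=> lt_jn; have [[others [X [extremal_X lift_v]]] _] := lifting.2 _ lt_jn.
split=> //; exists X; split => //.
by case: (vs j \in VO) extremal_X => -[].
Qed.

Lemma lift_inM j : j <= n -> forall u, inM p (rhos j u).
Proof.
elim: j => [_ u | j IH lt_jn u].
  rewrite lifting.1; apply: inM_Tup => [|i _]; first by rewrite size_nseq.
  by rewrite nth_nseq if_same; case: odd.
have [others [X [_ [w _ [inMX _ _]] lift_v]]] := lift_step lt_jn.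
have [-> | ne_u] := eqVneq u (vs j); last by rewrite others // IH // ltnW.
by rewrite lift_v; case: (mmax_cases (rhos j (vs j)) X) => ->; rewrite // IH // ltnW.
Qed.

Lemma lift_mono j : j < n -> forall u, mle (rhos j u) (rhos j.+1 u).
Proof.
move=> lt_jn u; have [others [X [_ _ lift_v]]] := lift_step lt_jn.
have [-> | ne_u] := eqVneq u (vs j); last by rewrite others // mle_refl.
by rewrite lift_v mle_mmaxl.
Qed.

Lemma lift_zero_above j : j <= n -> forall u s, rhos j u = Tup s ->
  forall i, p u < i -> nth 0 s i = 0.
Proof.
elim: j => [_ u s | j IH lt_jn u s].
  by rewrite lifting.1 => -[<-] [|i] _ //=; rewrite nth_nseq if_same.
have [others [X [_ [w _ prog_X] lift_v]]] := lift_step lt_jn.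
have [-> | ne_u] := eqVneq u (vs j); last by rewrite others //; apply: IH; apply: ltnW.
rewrite lift_v; case: (mmax_cases (rhos j (vs j)) X) => ->; first by apply: IH; apply: ltnW.
by move=> eq_X; rewrite eq_X in prog_X; apply: prog_zero_above prog_X.
Qed.

End LiftingSequence.

(** * A progress measure on Even's region of the truncated game *)

Definition decP (P : Prop) : bool := if excluded_middle_informative P then true else false.

Lemma decPP (P : Prop) : reflect P (decP P).
Proof. by rewrite /decP; case: excluded_middle_informative => H; constructor. Qed.

Lemma not_uniq_filter (T : eqType) (P : pred T) x0 (l : seq T) : ~~ uniq (filter P l) ->
  exists a b, [/\ a < b < size l, nth x0 l a = nth x0 l b & P (nth x0 l a)].
Proof.
elim: l => [|y l IH] //=; case: ifP => Py /=; last first.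
  by move=> /IH [a [b [/andP [lt_ab lt_bl] eq_ab Pa]]]; exists a.+1, b.+1; rewrite /= !ltnS lt_ab.
rewrite negb_and negbK => /orP [| /IH [a [b [/andP [lt_ab lt_bl] eq_ab Pa]]]].
  rewrite mem_filter => /andP [_ y_l]; exists 0, (index y l).+1.
  by rewrite /= ltnS index_mem y_l nth_index.
by exists a.+1, b.+1; rewrite /= !ltnS lt_ab.
Qed.

Section Lasso.
Variables (a b : nat).
Hypothesis lt_ab : a < b.

(* The index sequence 0, 1, ..., b - 1, a, a + 1, ..., b - 1, a, ... *)
Fixpoint lasso m := if m is m'.+1 then (if (lasso m').+1 == b then a else (lasso m').+1) else 0.

Lemma lasso_lt m : lasso m < b.
Proof.
elim: m => [|m IH] /=; first exact: leq_ltn_trans lt_ab.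
by case: eqP => // ne_b; rewrite ltn_neqAle IH andbT; apply/eqP.
Qed.

Lemma lasso_add m d : lasso m + d < b -> lasso (m + d) = lasso m + d.
Proof.
elim: d => [|d IH]; first by rewrite !addn0.
move=> lt_b; rewrite addnS /= IH; last by rewrite (leq_trans _ lt_b) // addnS.
by rewrite -addnS (ltn_eqF lt_b).
Qed.

Lemma lasso_returns m : lasso (m + (b - lasso m)) = a.
Proof.
have lt_mb := lasso_lt m.
have -> : b - lasso m = (b - (lasso m).+1).+1 by rewrite subnS prednK // subn_gt0.
rewrite addnS /= lasso_add; last by lia.
have -> : (lasso m + (b - (lasso m).+1)).+1 = b by lia.
by rewrite eqxx.
Qed.

End Lasso.

Section ReducedGame.
Variables (V : finType) (E : rel V) (p : V -> nat) (VO : {set V}) (k : nat).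

Definition reduced_edge : rel V := fun x y => if p x < k then y == x else E x y.
Definition reduced_prio (x : V) : nat := if p x < k then 0 else p x.

Lemma reduced_edgeE x y : k <= p x -> reduced_edge x y = E x y.
Proof. by rewrite /reduced_edge ltnNge => ->. Qed.

Lemma reduced_prioE x : k <= p x -> reduced_prio x = p x.
Proof. by rewrite /reduced_prio ltnNge => ->. Qed.

Lemma total_in_reduced : (forall x, exists y, E x y) -> total_in reduced_edge [set: V].
Proof.
move=> totE x _; case: (ltnP (p x) k) => [lt_xk | le_kx].
  by exists x; rewrite // /reduced_edge lt_xk.
by have [y Exy] := totE x; exists y; rewrite // reduced_edgeE.
Qed.

Local Notation Ek := reduced_edge.
Local Notation pk := reduced_prio.

Variables (W : bool -> {set V}) (s : bool -> V -> V).
Hypothesis solved : solves Ek pk VO [set: V] W s.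
Local Notation WE := (W false).
Local Notation WO := (W true).
Local Notation tau := (s false).
Local Notation sigO := (s true).

Lemma WE_or_WO x : (x \in WE) || (x \in WO).
Proof. by have [partV _ _ _] := solved false; have := in_setT x; rewrite partV inE. Qed.

Lemma WE_notin_WO x : x \in WE -> x \notin WO.
Proof. exact: solves_disj solved. Qed.

Lemma closed_WE x : x \in WE ->
  (x \notin VO -> Ek x (tau x) /\ tau x \in WE) /\ (x \in VO -> forall y, Ek x y -> y \in WE).
Proof.
have [_ _ closedWE _] := solved false; move=> /closedWE [own_move other_move].
split=> [notO | inO y]; first by apply: own_move; rewrite /owns eqbF_neg.
by apply: other_move; rewrite ?inE // /owns eqbF_neg negbK.
Qed.

Lemma closed_WO x : x \in WO ->
  (x \in VO -> Ek x (sigO x) /\ sigO x \in WO) /\ (x \notin VO -> forall y, Ek x y -> y \in WO).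
Proof.
have [_ _ closedWO _] := solved true; move=> /closedWO [own_move other_move].
split=> [inO | notO y]; first by apply: own_move; rewrite /owns eqb_id.
by apply: other_move; rewrite ?inE // /owns eqb_id.
Qed.

Lemma winning_WE pi : (forall i, Ek (pi i) (pi i.+1)) ->
  (forall i, pi i \notin VO -> pi i.+1 = tau (pi i)) -> pi 0 \in WE -> ~ odd_wins pk pi.
Proof.
have [_ _ _ winWE] := solved false; move=> Epi follow_tau; apply: winWE => [i|i].
  by rewrite inE.
by rewrite /owns eqbF_neg; apply: follow_tau.
Qed.

Lemma winning_WO pi : (forall i, Ek (pi i) (pi i.+1)) ->
  (forall i, pi i \in VO -> pi i.+1 = sigO (pi i)) -> pi 0 \in WO -> odd_wins pk pi.
Proof.
have [_ _ _ winWO] := solved true; move=> Epi follow_sigO; apply: winWO => [i|i].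
  by rewrite inE.
by rewrite /owns eqb_id; apply: follow_sigO.
Qed.

Lemma below_in_WE x : p x < k -> x \in WE.
Proof.
move=> lt_xk; have := WE_or_WO x; case: (boolP (x \in WE)) => //= _ xWO.
have Exx : Ek x x by rewrite /reduced_edge lt_xk.
have [| q [odd_q inf_q _]] := @winning_WO (fun _ => x) (fun _ => Exx) _ xWO.
  move=> _ xO; have [/(_ xO) [] ] := closed_WO xWO.
  by rewrite /reduced_edge lt_xk => /eqP ->.
have [i _] := inf_q 0.
by rewrite /reduced_prio lt_xk => eq_q; rewrite -eq_q in odd_q.
Qed.

Lemma WO_prio_ge x : x \in WO -> k <= p x.
Proof.
move=> xWO; rewrite leqNgt; apply/negP => /below_in_WE /WE_notin_WO.
by rewrite xWO.
Qed.

Definition tau_edge : rel V := fun x y => Ek x y && ((x \in VO) || (y == tau x)).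

Lemma tau_edge_WE x y : x \in WE -> tau_edge x y -> y \in WE.
Proof.
move=> xWE /andP [Exy]; have [own_move other_move] := closed_WE xWE.
case: (boolP (x \in VO)) => [xO _ | xE /= /eqP ->]; first exact: other_move.
by case: (own_move xE).
Qed.

Lemma tau_path_WE x t : x \in WE -> path tau_edge x t -> {subset x :: t <= WE}.
Proof.
elim: t x => [|y t IH] x xWE /=; first by move=> _ z; rewrite inE => /eqP ->.
case/andP => /(tau_edge_WE xWE) yWE /(IH _ yWE) sub_t z.
by rewrite inE => /orP [/eqP -> // | /sub_t].
Qed.

Lemma tau_lasso_not_odd i x t a b : x \in WE -> path tau_edge x t ->
  all (fun z => i <= pk z) (x :: t) -> a < b < size (x :: t) ->
  nth x (x :: t) a = nth x (x :: t) b -> pk (nth x (x :: t) a) = i -> ~~ odd i.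
Proof.
move=> xWE path_t ge_i /andP [lt_ab lt_bl] eq_ab pk_a; apply/negP => odd_i.
pose pi m := nth x (x :: t) (lasso a b m).
have step m : tau_edge (pi m) (pi m.+1).
  have lt_mb := lasso_lt lt_ab m; rewrite /pi /=.
  have -> : nth x (x :: t) (if (lasso a b m).+1 == b then a else (lasso a b m).+1) =
            nth x t (lasso a b m) by case: eqP => [eq_b | //]; rewrite eq_ab -{1}eq_b.
  by move/(pathP x): path_t; apply; rewrite (leq_trans lt_mb).
apply: (@winning_WE pi).
- by move=> m; case/andP: (step m).
- by move=> m notO; case/andP: (step m) => _; rewrite (negbTE notO) => /eqP.
- exact: xWE.
suff : wins_play pk (odd i) pi by rewrite odd_i.
apply: wins_play_min_prio.
  by move=> m; apply: (allP ge_i); apply: mem_nth; apply: leq_trans (lasso_lt lt_ab m) (ltnW lt_bl).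
by move=> N; exists (N + (b - lasso a b N)); rewrite ?leq_addr // /pi lasso_returns.
Qed.

Definition visits i x c : Prop := exists t, [/\ path tau_edge x t,
  all (fun z => i <= pk z) (x :: t) & c <= count (fun z => pk z == i) (x :: t)].

Definition max_visits i x : nat := \max_(c < #|V|.+1 | decP (visits i x c)) c.
Definition visit_bound i : nat := #|[set z in WE | pk z == i]|.

Lemma count_visits_le i x t : odd i -> x \in WE -> path tau_edge x t ->
  all (fun z => i <= pk z) (x :: t) -> count (fun z => pk z == i) (x :: t) <= visit_bound i.
Proof.
move=> odd_i xWE path_t ge_i; rewrite -size_filter.
case: (boolP (uniq [seq z <- x :: t | pk z == i])) =>
  [uniq_f | /(not_uniq_filter x) [a [b [lt_abl eq_ab /eqP pk_a]]]].
  rewrite /visit_bound cardE; apply: uniq_leq_size => // z.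
  rewrite mem_filter mem_enum in_set => /andP [pk_z /(tau_path_WE xWE path_t) ->].
  exact: pk_z.
by have := tau_lasso_not_odd xWE path_t ge_i lt_abl eq_ab pk_a; rewrite odd_i.
Qed.

Lemma max_visits_le i x : odd i -> x \in WE -> max_visits i x <= visit_bound i.
Proof.
move=> odd_i xWE; apply/bigmax_leqP => c /decPP [t [path_t ge_i le_c]].
exact: leq_trans le_c (count_visits_le odd_i xWE path_t ge_i).
Qed.

Lemma visits_le_max i x c : odd i -> x \in WE -> visits i x c -> c <= max_visits i x.
Proof.
move=> odd_i xWE vis; have lt_cV : c < #|V|.+1.
  have [t [path_t ge_i le_c]] := vis; rewrite ltnS (leq_trans le_c) //.
  exact: leq_trans (count_visits_le odd_i xWE path_t ge_i) (max_card _).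
exact: (@leq_bigmax_cond _ _ (fun c : 'I_#|V|.+1 => val c) (Ordinal lt_cV) (introT (decPP _) vis)).
Qed.

Lemma max_visits_spec i x : max_visits i x = 0 \/ visits i x (max_visits i x).
Proof.
pose A := [pred c : 'I_#|V|.+1 | decP (visits i x c)].
case: (posnP #|A|) => [A0 | A_gt0]; [left | right].
  by rewrite /max_visits big_pred0 // => c; have := card0_eq A0 c; rewrite inE.
have [c0 /decPP vis_c0 max_c0] := eq_bigmax_cond (fun c : 'I_#|V|.+1 => nat_of_ord c) A_gt0.
suff -> : max_visits i x = c0 by [].
exact: max_c0.
Qed.

Lemma max_visits_step i x y : odd i -> x \in WE -> tau_edge x y -> i <= pk x ->
  max_visits i y + (pk x == i) <= max_visits i x.
Proof.
move=> odd_i xWE Exy le_ix.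
have [-> | [t [path_t ge_i le_c]]] := max_visits_spec i y.
  case: eqP => pk_x; rewrite // add0n; apply: visits_le_max => //.
  by exists [::]; rewrite /= le_ix pk_x eqxx.
apply: visits_le_max => //; exists (y :: t); split; first by rewrite /= Exy path_t.
  by rewrite /= le_ix; exact: ge_i.
by rewrite addnC /= leq_add2l.
Qed.

Definition pm_entry x i : nat :=
  if odd i then (if i < k then #|Vpr p i| else max_visits i x) else 0.

(* Entry [i] bounds the visits to priority [i] on [tau]-paths before a priority below [i]. *)
Definition progress_measure x : meas := Tup (mkseq (pm_entry x) (dim p)).

Lemma progress_measure_inM x : x \in WE -> inM p (progress_measure x).
Proof.
move=> xWE; apply: inM_Tup => [|i lt_id]; first by rewrite size_mkseq.
rewrite nth_mkseq // /pm_entry; case odd_i: (odd i) => //; case: ltnP => // le_ki.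
apply: leq_trans (max_visits_le odd_i xWE) _; apply: subset_leq_card; apply/subsetP => z.
rewrite !inE => /andP [_ /eqP]; rewrite /reduced_prio.
case: ltnP => [_ eq_0i | _ ->]; last exact: eqxx.
by rewrite -eq_0i in odd_i.
Qed.

Lemma progress_measure_step x y : x \in WE -> k <= p x -> tau_edge x y ->
  mle_i (p x) (progress_measure y) (progress_measure x) /\
  (odd (p x) -> mlt_i (p x) (progress_measure y) (progress_measure x)).
Proof.
move=> xWE le_kx Exy.
have step i : i <= p x -> pm_entry y i + ((i == p x) && odd i) <= pm_entry x i.
  move=> le_ix; rewrite /pm_entry; case odd_i: (odd i); rewrite ?andbF ?addn0 //.
  case: ltnP => [lt_ik | le_ki].
    by rewrite andbT (ltn_eqF (leq_trans lt_ik le_kx)) addn0.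
  by have := max_visits_step odd_i xWE Exy; rewrite reduced_prioE // andbT eq_sym; apply.
have le_nth i : nth 0 (take (p x).+1 (mkseq (pm_entry y) (dim p))) i <=
                nth 0 (take (p x).+1 (mkseq (pm_entry x) (dim p))) i.
  rewrite !nth_take_if !nth_mkseq_if; case: ltnP => // lt_ix; case: ltnP => // _.
  exact: leq_trans (leq_addr _ _) (step i lt_ix).
have size_take_pm z : size (take (p x).+1 (mkseq (pm_entry z) (dim p))) = minn (p x).+1 (dim p).
  by rewrite size_take size_mkseq /minn; case: ltnP.
split; first by apply: lexle_pointwise; rewrite ?size_take_pm.
move=> odd_x; apply: lexlt_pointwise => //; first by rewrite !size_take_pm.
exists (p x); rewrite !nth_take_if ltnSn !nth_mkseq_if prio_lt_dim.
by have := step _ (leqnn _); rewrite eqxx odd_x addn1.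
Qed.

Lemma progc_progress_measure x w a : x \in WE -> k <= p x -> tau_edge x w ->
  inM p a -> mle a (progress_measure w) -> progc (p x) a (progress_measure x).
Proof.
move=> xWE le_kx Exw inMa le_a; have wWE := tau_edge_WE xWE Exw.
have [le_i lt_i] := progress_measure_step xWE le_kx Exw.
rewrite /progc; case: ifP => odd_x; last exact: mle_i_trans (mle_i_of _ le_a) le_i.
by rewrite (mle_mlt_i_trans inMa (progress_measure_inM wWE) (mle_i_of _ le_a) (lt_i odd_x)).
Qed.

Lemma prog_le_progress_measure (rho : V -> meas) x w X : x \in WE -> k <= p x ->
  tau_edge x w -> inM p (rho w) -> mle (rho w) (progress_measure w) ->
  is_prog p rho x w X -> mle X (progress_measure x).
Proof.
move=> xWE le_kx Exw inMw le_w [_ _ X_least]; apply: X_least.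
  exact: progress_measure_inM.
by rewrite prog_condE; apply: (progc_progress_measure xWE le_kx Exw inMw le_w).
Qed.

Lemma below_le_progress_measure x t : p x < k -> inM p (Tup t) ->
  (forall i, p x < i -> nth 0 t i = 0) -> mle (Tup t) (progress_measure x).
Proof.
move=> lt_xk inMt zero_t; have size_t := inM_size inMt.
apply: lexle_pointwise => [|i]; first by rewrite size_mkseq.
rewrite nth_mkseq_if; case: (leqP i (p x)) => [le_ix | /zero_t -> //].
case: (ltnP i (dim p)) => [_ | le_di]; last by rewrite nth_default ?size_t.
have := inM_nth i inMt; rewrite /pm_entry (leq_ltn_trans le_ix lt_xk).
by case: odd.
Qed.

End ReducedGame.

Section GuardedAttractor.
Variables (V : finType) (E : rel V) (p : V -> nat) (VO : {set V}) (k : nat) (U : {set V}).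
Local Notation gattr := (attr VO true E (Vge p k) U).

Lemma attr_iterE j : attr_iter E p VO k U j = aiter VO true E (Vge p k) U j.
Proof.
apply: eq_iter => A; apply/setP => x.
by rewrite !inE /attr_cond /owns eqb_id.
Qed.

Lemma attr_sub_Attr : gattr \subset Attr E p VO k U.
Proof.
apply/bigcapsP => B /and3P [sUB sBV /forallP closedB].
suff : forall j, aiter VO true E (Vge p k) U j \subset B by apply.
elim=> //= j IH; apply/subsetP => x; rewrite {1}/astep inE => /orP [/(subsetP IH) // | ].
rewrite inE => /andP [xV cond_x]; have /implyP := closedB x; apply; rewrite xV /=.
move: cond_x; rewrite /owns eqb_id /attr_cond; case: (x \in VO).
  by case/existsP => y /andP [Exy yj]; apply/existsP; exists y; rewrite Exy (subsetP IH).
by move/forallP => all_y; apply/forallP => y; apply/implyP => /(implyP (all_y y)) /(subsetP IH).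
Qed.

End GuardedAttractor.

(** * The first vertex to reach Top *)

Section FirstTop.
Variables (V : finType) (E : rel V) (p : V -> nat) (VO : {set V}).
Variables (rhos : nat -> V -> meas) (vs : nat -> V) (n : nat) (v : V).
Hypotheses (lifting : lifting_seq E p VO rhos vs n) (n_gt0 : 0 < n) (last_v : vs n.-1 = v).
Hypotheses (top_v : rhos n v = Top) (below_top : forall j u, j < n -> rhos j u <> Top).

Local Notation k := (p v).
Local Notation rho := (rhos n.-1).

Lemma pred_n_lt : n.-1 < n.
Proof. by rewrite prednK. Qed.

Lemma last_lift : (forall u, u != v -> rhos n u = rho u) /\
  exists X, [/\ if v \in VO then is_max (prog_val E p rho v) X else is_min (prog_val E p rho v) X,
                prog_val E p rho v X & rhos n v = mmax (rho v) X].
Proof. by have := lift_step lifting pred_n_lt; rewrite last_v prednK. Qed.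

Lemma top_prog : exists2 w, E v w & is_prog p rho v w Top.
Proof.
have [_ [X [_ [w Evw prog_X] lift_v]]] := last_lift.
case: (mmax_cases (rho v) X) => eq_max; rewrite eq_max in lift_v.
  by case: (@below_top _ v pred_n_lt); rewrite -lift_v.
by exists w; rewrite // -top_v lift_v.
Qed.

(* Prog(rho, v, w) = Top needs p v odd: for even p v a tuple always satisfies the condition. *)
Lemma odd_k : odd k.
Proof.
have [w _ [_ _ Top_least]] := top_prog; apply: contraT => even_k.
case rho_w: (rho w) Top_least => [t|]; last by case: (@below_top _ w pred_n_lt).
have inMt : inM p (Tup t) by rewrite -rho_w; exact: (lift_inM lifting (ltnW pred_n_lt) w).
move=> /(_ _ (inM_zero_above k inMt)); rewrite prog_condE rho_w /progc (negbTE even_k).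
by rewrite /= take_zero_above lexle_refl => /(_ isT).
Qed.

Variables (W : bool -> {set V}) (s : bool -> V -> V).
Hypothesis solved : solves (reduced_edge E p k) (reduced_prio p k) VO [set: V] W s.
Local Notation WE := (W false).
Local Notation WO := (W true).
Local Notation tau := (s false).
Local Notation sigO := (s true).
Local Notation pm := (progress_measure E p VO k s).

Lemma rhos_le_progress_measure j : j <= n -> forall x, x \in WE -> mle (rhos j x) (pm x).
Proof.
elim: j => [_ x _ | j IH lt_jn x xWE].
  rewrite lifting.1; apply: lexle_pointwise => [|i]; first by rewrite size_nseq size_mkseq.
  by rewrite nth_nseq if_same.
have le_jn := ltnW lt_jn; have inM_j := lift_inM lifting le_jn.
have [others [X [extremal_X _ lift_x]]] := lift_step lifting lt_jn.
have [eq_x | ne_x] := eqVneq x (vs j); last by rewrite others // IH.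
case: (ltnP (p x) k) => [lt_xk | le_kx].
  case rho_x: (rhos j.+1 x) => [t|].
    apply: below_le_progress_measure => //; last exact: (lift_zero_above lifting lt_jn rho_x).
    by rewrite -rho_x; exact: (lift_inM lifting lt_jn).
  have eq_n : j.+1 = n.
    by apply/eqP; rewrite eqn_leq lt_jn leqNgt; apply/negP => /(@below_top _ x); apply.
  by move: lt_xk; rewrite eq_x -last_v -eq_n ltnn.
rewrite -eq_x in extremal_X lift_x *; rewrite lift_x; apply: mmax_le; first exact: IH.
move: extremal_X; case: ifP => xO [[w Exw prog_X] X_extremal].
  have Exw' : tau_edge E p VO k s x w by rewrite /tau_edge reduced_edgeE // Exw xO.
  have wWE := tau_edge_WE solved xWE Exw'.
  exact: prog_le_progress_measure Exw' (inM_j w) (IH le_jn w wWE) prog_X.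
have [E_tau tauWE] := (closed_WE solved xWE).1 (negbT xO).
have Ex_tau : tau_edge E p VO k s x (tau x) by rewrite /tau_edge E_tau eqxx orbT.
have [P prog_P] := prog_exists p (rhos j) x (tau x).
apply: mle_trans (X_extremal P _) _; first by exists (tau x); rewrite // -(reduced_edgeE E _ le_kx).
exact: prog_le_progress_measure Ex_tau (inM_j _) (IH le_jn _ tauWE) prog_P.
Qed.

Lemma v_in_WO : v \in WO.
Proof.
have := WE_or_WO solved v; case: (boolP (v \in WE)) => //= vWE _.
by have := rhos_le_progress_measure (leqnn n) vWE; rewrite top_v.
Qed.

Lemma visit_bound_lt : visit_bound p k W k < #|Vpr p k|.
Proof.
apply: proper_card; apply/properP; split.
  apply/subsetP => z; rewrite !inE => /andP [_ /eqP]; rewrite /reduced_prio.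
  case: ltnP => [_ eq_0k | _ /eqP //].
  by have := odd_k; rewrite -eq_0k.
exists v; first by rewrite inE.
rewrite inE negb_and; apply/orP; left; apply/negP.
by move=> /(WE_notin_WO solved); rewrite v_in_WO.
Qed.

(* A measure of M strictly above [pm u] at [k]; it exists because [v] is not in [WE]. *)
Definition bumped_entry u i : nat :=
  if i < k then pm_entry E p VO k s u i else if i == k then (max_visits E p VO k s k u).+1 else 0.

Lemma max_succ_in_WO u : v \in VO -> E v u ->
  (forall w, E v w -> mle (rhos n w) (rhos n u)) -> u \in WO.
Proof.
move=> vO Evu u_max; have [-> | ne_uv] := eqVneq u v; first exact: v_in_WO.
have := WE_or_WO solved u; case: (boolP (u \in WE)) => //= uWE _.
have [w0 Evw0 [_ _ Top_least]] := top_prog.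
have inM_rho := lift_inM lifting (ltnW pred_n_lt).
have le_w0u : mle (rho w0) (rho u).
  rewrite -((last_lift).1 _ ne_uv); apply: mle_trans (u_max _ Evw0).
  by have := lift_mono lifting pred_n_lt w0; rewrite prednK.
have lt_kd := prio_lt_dim p v.
set m := Tup (mkseq (bumped_entry u) (dim p)).
have inMm : inM p m.
  apply: inM_Tup => [|i lt_id]; first by rewrite size_mkseq.
  rewrite nth_mkseq // /bumped_entry /pm_entry; case: ltnP => [lt_ik | le_ki].
    by case: (odd i) => //; rewrite lt_ik.
  case: eqP => [-> | _]; last by case: odd.
  by rewrite odd_k; apply: leq_trans visit_bound_lt; rewrite ltnS max_visits_le ?odd_k.
have lt_pm_m : mlt_i k (pm u) m.
  rewrite /mlt_i /progress_measure /m.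
  apply: lexlt_pointwise; first by rewrite !size_take !size_mkseq.
    move=> i; rewrite !nth_take_if !nth_mkseq_if ltnS; case: (leqP i k) => // le_ik.
    rewrite (leq_ltn_trans le_ik lt_kd) /bumped_entry; case: (ltnP i k) => // le_ki.
    have -> : i = k by apply/eqP; rewrite eqn_leq le_ik le_ki.
    by rewrite eqxx /pm_entry odd_k ltnn.
  exists k; rewrite !nth_take_if ltnSn !nth_mkseq_if lt_kd /bumped_entry ltnn eqxx.
  by rewrite /pm_entry odd_k ltnn.
have cond_u : progc k (rho u) m.
  rewrite /progc odd_k (mle_mlt_i_trans (inM_rho u) (progress_measure_inM solved uWE)) //.
  exact/mle_i_of/(rhos_le_progress_measure (ltnW pred_n_lt) uWE).
(* [m] is a tuple satisfying the condition of Prog(rho, v, w0) = Top. *)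
have := Top_least m inMm; rewrite prog_condE.
by move=> /(_ (progc_antimono (inM_rho _) (inM_rho _) le_w0u cond_u)).
Qed.

Lemma Attr_sub_WO : Attr E p VO k [set v] \subset WO.
Proof.
apply: bigcap_inf; apply/and3P; split.
- by rewrite sub1set v_in_WO.
- by apply/subsetP => x /(WO_prio_ge solved); rewrite inE.
apply/forallP => u; apply/implyP => /andP [le_ku cond_u]; rewrite inE in le_ku.
have := WE_or_WO solved u; case: (boolP (u \in WE)) => //= uWE _.
have [own_move other_move] := closed_WE solved uWE.
move: cond_u; rewrite /attr_cond; case: ifP => uO.
  case/existsP => w /andP [Euw wWO].
  have wWE : w \in WE by apply: other_move; rewrite // reduced_edgeE.
  by have := WE_notin_WO solved wWE; rewrite wWO.
move/forallP => all_w; have [E_tau tauWE] := own_move (negbT uO).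
move: E_tau; rewrite reduced_edgeE // => /(implyP (all_w _)) tauWO.
by have := WE_notin_WO solved tauWE; rewrite tauWO.
Qed.

Local Notation A := (attr VO true E (Vge p k) [set v]).
Local Notation Aiter := (aiter VO true E (Vge p k) [set v]).

Lemma attr_sub_WO : A \subset WO.
Proof. exact: subset_trans (attr_sub_Attr _ _ _ _ _) Attr_sub_WO. Qed.

Lemma v_in_attr : v \in A.
Proof. by apply: (subsetP (sub_attr _ _ _ _ _)); rewrite inE. Qed.

Section OddStrategy.
Variables (u0 : V) (a nx : V -> V).
Hypotheses (u0_WO : u0 \in WO) (Evu0 : v \in VO -> E v u0) (nxP : forall x, E x (nx x)).
Hypothesis aP : forall x, x \in A -> x \notin [set v] -> owns VO true x ->
  E x (a x) /\ forall j, x \in Aiter j.+1 -> a x \in Aiter j.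

(* The default [nx] is only used outside [WO], where the strategy is irrelevant. *)
Definition odd_strategy x :=
  if x == v then u0 else if x \in A then a x else if E x (sigO x) then sigO x else nx x.

Lemma odd_strategy_attr x : x \in A -> x != v -> odd_strategy x = a x.
Proof. by move=> xA ne_xv; rewrite /odd_strategy (negbTE ne_xv) xA. Qed.

Lemma odd_strategy_WO x : x \in VO -> x \in WO -> x \notin A -> odd_strategy x = sigO x.
Proof.
move=> xO xWO xA; have ne_xv : x != v by apply: contraNneq xA => ->; apply: v_in_attr.
have [/(_ xO) [E_sig _] _] := closed_WO solved xWO.
rewrite /odd_strategy (negbTE ne_xv) (negbTE xA).
by rewrite -(reduced_edgeE E _ (WO_prio_ge solved xWO)) E_sig.
Qed.

Lemma attr_owner_move x : x \in VO -> x \in A -> x != v ->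
  E x (a x) /\ forall j, x \in Aiter j.+1 -> a x \in Aiter j.
Proof. by move=> xO xA ne_xv; apply: aP; rewrite ?inE // /owns eqb_id. Qed.

Lemma odd_strategy_legal : is_strategy E VO odd_strategy.
Proof.
move=> x xO; have [eq_xv | ne_xv] := eqVneq x v.
  by rewrite eq_xv /odd_strategy eqxx; apply: Evu0; rewrite -eq_xv.
case: (boolP (x \in A)) => xA.
  by rewrite odd_strategy_attr //; case: (attr_owner_move xO xA ne_xv).
by rewrite /odd_strategy (negbTE ne_xv) (negbTE xA); case: ifP.
Qed.

Lemma odd_strategy_closed : closed_on E VO odd_strategy WO.
Proof.
move=> pi play_pi follow pi0WO; elim=> // i piWO.
have [own_move other_move] := closed_WO solved piWO.
case: (boolP (pi i \in VO)) => piO; last first.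
  by apply: other_move => //; rewrite reduced_edgeE ?(WO_prio_ge solved).
rewrite follow //; have [-> | ne_v] := eqVneq (pi i) v; first by rewrite /odd_strategy eqxx.
case: (boolP (pi i \in A)) => piA; last by rewrite odd_strategy_WO //; case: (own_move piO).
rewrite odd_strategy_attr //; apply: (subsetP attr_sub_WO).
have [_ a_down] := attr_owner_move piO piA ne_v.
by apply: attractor_move_attr a_down piA _; rewrite inE.
Qed.

Lemma odd_strategy_attracting : attracting E p VO k [set v] odd_strategy.
Proof.
move=> j x xO; rewrite inE !attr_iterE => ne_xv x_j1 x_j.
have xA : x \in A := subsetP (aiter_sub_attr _ _ _ _ _ _) _ x_j1.
by rewrite odd_strategy_attr //; have [_ ->] := attr_owner_move xO xA ne_xv.
Qed.

Lemma odd_strategy_wins : wins_from E p VO odd_strategy WO.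
Proof.
move=> pi play_pi follow pi0WO; have stayWO := odd_strategy_closed play_pi follow pi0WO.
have [inf_A | [N out_A]] := inf_often_or_eventually_not (fun x => x \in A) pi.
  suff : wins_play p (odd k) pi by rewrite odd_k.
  apply: wins_play_min_prio => [i | N]; first exact: (WO_prio_ge solved (stayWO i)).
  have [|||i le_Ni] := attr_reach_inf (a := a) _ _ _ inf_A N.
  - by move=> x xA; rewrite inE => ne_xv own_x; have [] := aP xA _ own_x; rewrite ?inE.
  - exact: play_pi.
  - move=> i piA; rewrite inE => ne_v own_i; rewrite follow ?odd_strategy_attr //.
    by move: own_i; rewrite /owns eqb_id.
  by rewrite inE => /eqP pi_v; exists i; rewrite ?pi_v.
apply/(odd_wins_shift p pi N); apply: (@odd_wins_eq _ (reduced_prio p k)).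
  by move=> i; rewrite reduced_prioE //; apply: (WO_prio_ge solved (stayWO _)).
apply: (winning_WO solved) => [i | i piO | ]; rewrite /shift ?addn0 //.
  by rewrite addnS reduced_edgeE ?(WO_prio_ge solved).
by rewrite addnS follow // odd_strategy_WO ?out_A ?leq_addr.
Qed.

End OddStrategy.

Lemma odd_winning_strategy u0 : (forall x, exists y, E x y) ->
  u0 \in WO -> (v \in VO -> E v u0) ->
  exists sigma, [/\ is_strategy E VO sigma, closed_on E VO sigma WO,
    wins_from E p VO sigma WO, attracting E p VO k [set v] sigma & sigma v = u0].
Proof.
move=> totE u0_WO Evu0; have [nx nxP] := choice _ totE.
have [a aP] := attractor_strategy VO true E (Vge p k) [set v].
exists (odd_strategy u0 a nx); split.
- exact: odd_strategy_legal.
- exact: odd_strategy_closed.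
- exact: odd_strategy_wins.
- exact: odd_strategy_attracting.
by rewrite /odd_strategy eqxx.
Qed.

End FirstTop.

Theorem theorem4 (V : finType) (E : rel V) (p : V -> nat) (VO : {set V})
  (Etot : forall v : V, exists w, E v w)
  (rhos : nat -> V -> meas) (vs : nat -> V) (n : nat) (v : V) :
  lifting_seq E p VO rhos vs n ->
  0 < n -> vs n.-1 = v -> rhos n v = Top ->
  (forall j u, j < n -> rhos j u <> Top) ->
  let rho := rhos n in
  let k := p v in
  let A := Attr E p VO k [set v] in
  (v \in VO ->
     forall u, E v u -> (forall w, E v w -> mle (rho w) (rho u)) ->
     exists D : {set V},
       [/\ odd_dominion E p VO D, A \subset D,
           (forall w, w \in D -> k <= p w) &
           exists sigma : V -> V,
             [/\ is_strategy E VO sigma, closed_on E VO sigma D,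
                 wins_from E p VO sigma D, sigma v = u &
                 attracting E p VO k [set v] sigma]]) /\
  (v \notin VO ->
     exists D : {set V},
       [/\ odd_dominion E p VO D, A \subset D,
           (forall w, w \in D -> k <= p w),
           (exists sigma : V -> V,
             [/\ is_strategy E VO sigma, closed_on E VO sigma D,
                 wins_from E p VO sigma D &
                 attracting E p VO k [set v] sigma]) &
           post E v \subset D]).
Proof.
move=> lifting n_gt0 last_v top_v below_top rho k A.
have [W [s solved]] := zielonka (reduced_prio p (p v)) VO (total_in_reduced p (p v) Etot).
have Attr_WO := Attr_sub_WO lifting last_v top_v below_top solved.
have WO_ge : forall w, w \in W true -> k <= p w := WO_prio_ge solved.
have strategy := odd_winning_strategy lifting n_gt0 last_v top_v below_top solved Etot.
split=> [vO u Evu u_max | vE].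
  have uWO := max_succ_in_WO lifting n_gt0 last_v top_v below_top solved vO Evu u_max.
  have [sigma [legal closed wins attracting sigma_v]] := strategy u uWO (fun _ => Evu).
  by exists (W true); split=> //; [exists sigma | exists sigma].
have vWO := v_in_WO lifting last_v top_v below_top solved.
have [sigma [legal closed wins attracting _]] :=
  strategy v vWO (fun vO => False_ind _ (negP vE vO)).
exists (W true); split=> //; first by exists sigma.
  by exists sigma.
apply/subsetP => w; rewrite inE => Evw.
by apply: (closed_WO solved vWO).2 => //; rewrite reduced_edgeE.
Qed.
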